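(* Let $V\subseteq\mathcal V$ be finite and $\mathcal E,\mathcal F\in\mathit{DProg}(V)$. (1) $\mathcal E\le_T^e\mathcal F$ implies $\mathcal E\le_T^p\mathcal F$, but the converse fails in general (there exist $\mathcal E,\mathcal F$ with $\mathcal E\le_T^p\mathcal F$ and not $\mathcal E\le_T^e\mathcal F$). (2) $\mathcal E\le_P^e\mathcal F$ implies $\mathcal E\le_P^p\mathcal F$, but the converse fails in general.
   Context: $\mathcal V$ is a countably infinite set of qubit variables; $\mathcal H_V=\bigotimes_{q\in V}\mathcal H_q$. $\mathcal D(\mathcal H)$: partial density operators; $\mathcal P(\mathcal H)$: effects (positive operators with eigenvalues in $[0,1]$); $\mathcal S(\mathcal H)$: projectors. $\mathit{DProg}(V)$: completely positive trace-nonincreasing super-operators on $\mathcal L(\mathcal H_V)$. Operators/super-operators on subsystems are implicitly extended by tensoring with identities. For finite $W$ and $M,N\in\mathcal P(\mathcal H_W)$: $\mathcal E\models_{tot}(M,N)$ iff for all finite $X\supseteq V\cup W$ and $\rho\in\mathcal D(\mathcal H_X)$, ${\rm tr}(M\rho)\le{\rm tr}(N\mathcal E(\rho))$; $\mathcal E\models_{par}(M,N)$ iff for all such $X,\rho$, ${\rm tr}(M\rho)\le{\rm tr}(N\mathcal E(\rho))+{\rm tr}(\rho)-{\rm tr}(\mathcal E(\rho))$. $\mathcal E\le_T^e\mathcal F$ iff for every finite $W$ and $M,N\in\mathcal P(\mathcal H_W)$, $\mathcal E\models_{tot}(M,N)\Rightarrow\mathcal F\models_{tot}(M,N)$; $\le_T^p$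 is defined identically but with $M,N$ ranging only over projectors $\mathcal S(\mathcal H_W)$; $\le_P^e,\le_P^p$ likewise with $\models_{par}$. *)

From HB Require Import structures.
From mathcomp Require Import all_boot all_algebra finmap.
From mathcomp.real_closed Require Import complex.
From mathcomp Require Import Rstruct.
Set Implicit Arguments. Unset Strict Implicit. Unset Printing Implicit Defensive.
Import GRing.Theory Num.Theory.
Local Open Scope ring_scope.


Definition C : numClosedFieldType := (Rdefinitions.R)[i].

(* Computational basis of H_X = tensor_{q in X} H_q (H_q = C^2):
   assignments of a bit to each variable of X. *)
Definition basis (X : {fset nat}) : finType := {ffun X -> bool}.

(* Operators on the Hilbert space with orthonormal basis indexed by I. *)
Definition opr (I : finType) := I -> I -> C.
Definition sop (I : finType) := opr I -> opr I.

Section Ops.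
Context {I : finType}.
Definition mulo (A B : opr I) : opr I := fun i j => \sum_k A i k * B k j.
Definition tro (A : opr I) : C := \sum_i A i i.
Definition adjo (A : opr I) : opr I := fun i j => (A j i)^*.
Definition appo (A : opr I) (v : I -> C) : I -> C := fun i => \sum_j A i j * v j.

Definition positive (A : opr I) : Prop :=
  forall v : I -> C, 0 <= \sum_i \sum_j (v i)^* * A i j * v j.
Definition eigenvalue (A : opr I) (l : C) : Prop :=
  exists v : I -> C, (exists i, v i != 0) /\ forall i, appo A v i = l * v i.
Definition pdensity (A : opr I) : Prop := positive A /\ tro A <= 1.
Definition effect (A : opr I) : Prop :=
  positive A /\ forall l, eigenvalue A l -> 0 <= l <= 1.
Definition projector (A : opr I) : Prop :=
  (forall i j, mulo A A i j = A i j) /\ (forall i j, adjo A i j = A i j).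

Definition linear_sop (E : sop I) : Prop :=
  forall (a : C) (A B : opr I) i j,
    E (fun k l => a * A k l + B k l) i j = a * E A i j + E B i j.
(* E (x) id_K, for an ancilla with basis K *)
Definition sop_ext (K : finType) (E : sop I) : sop (prod I K) :=
  fun rho ik jl => E (fun i' j' => rho (i', ik.2) (j', jl.2)) ik.1 jl.1.
Definition trace_nonincreasing (E : sop I) : Prop :=
  forall rho : opr I, positive rho -> tro (E rho) <= tro rho.
End Ops.

Definition completely_positive {I : finType} (E : sop I) : Prop :=
  forall (k : nat) (rho : opr (prod I 'I_k)),
    positive rho -> positive (sop_ext (K := 'I_k) E rho).

Definition DProg (V : {fset nat}) (E : sop (basis V)) : Prop :=
  linear_sop E /\ completely_positive E /\ trace_nonincreasing E.

(* value of a basis state of H_X at a variable (false outside X; unused) *)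
Definition glob (X : {fset nat}) (s : basis X) (q : nat) : bool :=
  if (insub q : option X) is Some x then s x else false.
Definition restr (X W : {fset nat}) (s : basis X) : basis W :=
  [ffun w : W => glob s (val w)].
Definition agree_out (X W : {fset nat}) (s t : basis X) : bool :=
  [forall x : X, (val x \notin W) ==> (s x == t x)].
Definition join (V X : {fset nat}) (u : basis V) (s : basis X) : basis X :=
  [ffun x : X => if val x \in V then glob u (val x) else s x].

(* M (x) I_{X \ W}  (meaningful when W is a subset of X) *)
Definition extop (W X : {fset nat}) (M : opr (basis W)) : opr (basis X) :=
  fun s t => if agree_out W s t then M (restr W s) (restr W t) else 0.
(* E (x) id_{X \ V} (meaningful when V is a subset of X, E linear) *)
Definition extsop (V X : {fset nat}) (E : sop (basis V)) : sop (basis X) :=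
  fun rho s t => E (fun u v => rho (join u s) (join v t)) (restr V s) (restr V t).

Definition sat_tot (V W : {fset nat}) (E : sop (basis V)) (M N : opr (basis W)) : Prop :=
  forall X : {fset nat}, (V `|` W `<=` X)%fset ->
  forall rho : opr (basis X), pdensity rho ->
    tro (mulo (extop (X := X) M) rho) <= tro (mulo (extop (X := X) N) (extsop (X := X) E rho)).
Definition sat_par (V W : {fset nat}) (E : sop (basis V)) (M N : opr (basis W)) : Prop :=
  forall X : {fset nat}, (V `|` W `<=` X)%fset ->
  forall rho : opr (basis X), pdensity rho ->
    tro (mulo (extop (X := X) M) rho) <=
      tro (mulo (extop (X := X) N) (extsop (X := X) E rho)) + tro rho - tro (extsop (X := X) E rho).

Definition le_T_e (V : {fset nat}) (E F : sop (basis V)) : Prop :=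
  forall (W : {fset nat}) (M N : opr (basis W)), effect M -> effect N ->
    sat_tot E M N -> sat_tot F M N.
Definition le_T_p (V : {fset nat}) (E F : sop (basis V)) : Prop :=
  forall (W : {fset nat}) (M N : opr (basis W)), projector M -> projector N ->
    sat_tot E M N -> sat_tot F M N.
Definition le_P_e (V : {fset nat}) (E F : sop (basis V)) : Prop :=
  forall (W : {fset nat}) (M N : opr (basis W)), effect M -> effect N ->
    sat_par E M N -> sat_par F M N.
Definition le_P_p (V : {fset nat}) (E F : sop (basis V)) : Prop :=
  forall (W : {fset nat}) (M N : opr (basis W)), projector M -> projector N ->
    sat_par E M N -> sat_par F M N.

(** Projectors are effects, so each effect-based order implies the
    projector-based one. The converses already fail for the empty variable
    set, where [c *: id] with [0 < c < 1] is compared with [0] (total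
    correctness) and with [id] (partial correctness). Test a formula with
    projectors [M], [N] on the pure state given by a column [w] of [M]:
    as [<w, N w> <= |w|^2 = <w, M w>], total correctness of [c *: id] forces
    [w = 0], i.e. [M = 0], which every program satisfies; partial correctness
    forces [N w = w], i.e. [N M = M], so [N - M] is a projector and [id]
    satisfies the formula. The constant effects [(c, 1)] and [(1 - c, 0)]
    separate [c *: id] from [0] and from [id]. *)

From mathcomp Require Import all_boot all_order all_algebra finmap.
From mathcomp Require Import ring.
From mathcomp.real_closed Require Import complex.
From mathcomp Require Import Rstruct.
From Stdlib Require Import FunctionalExtensionality.
Set Implicit Arguments. Unset Strict Implicit. Unset Printing Implicit Defensive.
Import Order.TTheory GRing.Theory Num.Theory.
Local Open Scope ring_scope.

Section Operators.
Variable I : finType.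
Implicit Types (v w : I -> C) (A B rho : opr I).

Definition inner v w : C := \sum_i (v i)^* * w i.
Definition outer w : opr I := fun s t => w s * (w t)^*.
Definition hermitian A := forall i j, adjo A i j = A i j.

Lemma hermitian_conj A : hermitian A -> forall i j, (A i j)^* = A j i.
Proof. by move=> hA i j; apply: hA. Qed.

Lemma inner_ge0 v : 0 <= inner v v.
Proof. by apply: sumr_ge0 => i _; rewrite mulrC mul_conjC_ge0. Qed.

Lemma inner_eq0 v : inner v v = 0 -> forall i, v i = 0.
Proof.
move=> v0 i; have /eqP : (v i)^* * v i = 0.
  by apply: (psumr_eq0P _ v0) => // j _; rewrite mulrC mul_conjC_ge0.
by rewrite mulf_eq0 conjC_eq0 orbb => /eqP.
Qed.

Lemma appo_mulo A B v i : appo A (appo B v) i = appo (mulo A B) v i.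
Proof.
rewrite /appo /mulo; under eq_bigr do rewrite mulr_sumr.
rewrite exchange_big; apply: eq_bigr => k _; rewrite mulr_suml.
by apply: eq_bigr => j _; rewrite mulrA.
Qed.

Lemma inner_hermitian A v w : hermitian A -> inner (appo A v) w = inner v (appo A w).
Proof.
move=> hA; rewrite /inner /appo; under eq_bigr do rewrite rmorph_sum mulr_suml.
rewrite exchange_big; apply: eq_bigr => j _; rewrite mulr_sumr.
by apply: eq_bigr => i _; rewrite rmorphM /= (hermitian_conj hA); ring.
Qed.

Lemma inner_subr v w : inner (fun i => v i - w i) (fun i => v i - w i) =
  inner v v - inner v w - inner w v + inner w w.
Proof.
rewrite /inner -!sumrB -big_split; apply: eq_bigr => i _; rewrite rmorphB /=; ring.
Qed.

Lemma inner_sub_projection N w : projector N ->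
  inner w w - inner w (appo N w) =
  inner (fun i => w i - appo N w i) (fun i => w i - appo N w i).
Proof.
move=> [iN hN]; have NwNw : inner (appo N w) (appo N w) = inner w (appo N w).
  rewrite inner_hermitian //; apply: eq_bigr => i _; rewrite appo_mulo.
  by congr (_ * _); apply: eq_bigr => j _; rewrite iN.
rewrite inner_subr NwNw inner_hermitian //; ring.
Qed.

Lemma outer_positive w : positive (outer w).
Proof.
move=> v.
have -> : \sum_i \sum_j (v i)^* * outer w i j * v j = (inner w v)^* * inner w v.
  rewrite /inner rmorph_sum mulr_suml; apply: eq_bigr => i _; rewrite mulr_sumr.
  by apply: eq_bigr => j _; rewrite /outer rmorphM /= conjCK; ring.
by rewrite mulrC mul_conjC_ge0.
Qed.

Lemma tro_mulo_outer A w : tro (mulo A (outer w)) = inner w (appo A w).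
Proof.
rewrite /tro /mulo /inner /appo; apply: eq_bigr => i _; rewrite mulr_sumr.
by apply: eq_bigr => k _; rewrite /outer; ring.
Qed.

Lemma tro_outer w : tro (outer w) = inner w w.
Proof. by apply: eq_bigr => i _; rewrite /outer mulrC. Qed.

Lemma tro_scale c rho : tro (fun s t => c * rho s t) = c * tro rho.
Proof. by rewrite /tro mulr_sumr. Qed.

Lemma tro_mulo_scale A c rho :
  tro (mulo A (fun s t => c * rho s t)) = c * tro (mulo A rho).
Proof.
rewrite /tro /mulo mulr_sumr; apply: eq_bigr => i _; rewrite mulr_sumr.
by apply: eq_bigr => k _; ring.
Qed.

Lemma positive_diag_ge0 rho i : positive rho -> 0 <= rho i i.
Proof.
suff <- : \sum_a \sum_b ((a == i)%:R)^* * rho a b * (b == i)%:R = rho i i by apply.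
rewrite (bigD1 i) //= [X in _ + X]big1 ?addr0 => [|a /negPf ->]; last first.
  by apply: big1 => b _; rewrite rmorph0 !mul0r.
rewrite (bigD1 i) //= [X in _ + X]big1 ?addr0 => [|b /negPf ->]; last by rewrite mulr0.
by rewrite eqxx rmorph1 mul1r mulr1.
Qed.

Lemma tro_ge0 rho : positive rho -> 0 <= tro rho.
Proof. by move=> rho_ge0; apply: sumr_ge0 => i _; apply: positive_diag_ge0. Qed.

Lemma projector_tro_ge0 A rho : projector A -> positive rho -> 0 <= tro (mulo A rho).
Proof.
move=> [iA hA] rho_ge0.
have -> : tro (mulo A rho) = \sum_m \sum_a \sum_b (A a m)^* * rho a b * A b m.
  rewrite /tro /mulo.
  under eq_bigr => i _ do under eq_bigr => k _ do rewrite -iA /mulo mulr_suml.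
  under eq_bigr do rewrite exchange_big.
  rewrite exchange_big; apply: eq_bigr => m _.
  rewrite exchange_big; apply: eq_bigr => k _.
  by apply: eq_bigr => i _; rewrite (hermitian_conj hA); ring.
by apply: sumr_ge0 => m _; apply: (rho_ge0 (fun b => A b m)).
Qed.

Lemma projector_effect A : projector A -> effect A.
Proof.
move=> A_proj; have [iA hA] := A_proj; split.
  move=> v; have := projector_tro_ge0 A_proj (outer_positive v).
  rewrite tro_mulo_outer; congr (_ <= _); apply: eq_bigr => i _.
  by rewrite mulr_sumr; apply: eq_bigr => j _; rewrite mulrA.
move=> l [v [[i vi_neq0] Av]].
have AAv : appo A (appo A v) i = l * (l * v i).
  rewrite {1}/appo; under eq_bigr do rewrite Av.
  by rewrite -Av /appo mulr_sumr; apply: eq_bigr => j _; ring.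
have AAv' : appo A (appo A v) i = l * v i.
  by rewrite appo_mulo -Av; apply: eq_bigr => j _; rewrite iA.
have : (l * l - l) * v i == 0 by rewrite mulrBl -mulrA -AAv AAv' subrr.
rewrite mulf_eq0 (negPf vi_neq0) orbF -{3}(mulr1 l) -mulrBr mulf_eq0 subr_eq0.
by case/orP=> /eqP ->; rewrite ?lexx ?ler01.
Qed.

Lemma projector_subr (M N : opr I) : projector M -> projector N ->
  (forall i j, mulo N M i j = M i j) -> projector (fun s t => N s t - M s t).
Proof.
move=> [iM hM] [iN hN] NM.
have MN i j : mulo M N i j = M i j.
  rewrite -[M i j]hM /adjo -NM /mulo rmorph_sum; apply: eq_bigr => k _.
  by rewrite rmorphM /= (hermitian_conj hN) (hermitian_conj hM) mulrC.
split=> i j; last first.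
  by rewrite /adjo rmorphB /= (hermitian_conj hN) (hermitian_conj hM).
have expand k : (N i k - M i k) * (N k j - M k j) =
    N i k * N k j - N i k * M k j - M i k * N k j + M i k * M k j by ring.
rewrite /mulo; under eq_bigr do rewrite expand.
rewrite big_split /= !sumrB.
move: (iN i j) (NM i j) (MN i j) (iM i j); rewrite /mulo => -> -> -> ->; ring.
Qed.

Section ProjectorColumn.
Variables (M : opr I) (j : I).
Hypothesis M_proj : projector M.
Let w := fun s => M s j.

Lemma appo_projector_column i : appo M w i = w i.
Proof. by rewrite /appo /w -(M_proj.1 i j). Qed.

Lemma inner_projector_column : inner w w = w j.
Proof.
rewrite /inner /w -(M_proj.1 j j); apply: eq_bigr => s _.
by rewrite (hermitian_conj M_proj.2).
Qed.

Lemma pdensity_outer_projector_column : pdensity (outer w).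
Proof.
split; first exact: outer_positive.
rewrite tro_outer; set x := inner w w; have x_ge0 : 0 <= x := inner_ge0 w.
have xx_le_x : x * x <= x.
  have wj : w j = x := esym inner_projector_column.
  have -> : x * x = (w j)^* * w j by rewrite wj geC0_conj.
  rewrite /x /inner (bigD1 j) //= lerDl.
  by apply: sumr_ge0 => i _; rewrite mulrC mul_conjC_ge0.
have [-> | x_neq0] := eqVneq x 0; first exact: ler01.
have x_gt0 : 0 < x by rewrite lt_def x_neq0 x_ge0.
by rewrite -(ler_pM2l x_gt0) mulr1.
Qed.

End ProjectorColumn.
End Operators.

Lemma glob_val (X : {fset nat}) (s : basis X) (x : X) : glob s (val x) = s x.
Proof. by rewrite /glob valK. Qed.

Section Extension.
Variables W X : {fset nat}.
Implicit Types (s t k : basis X) (u : basis W).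

Lemma agree_out_refl s : agree_out W s s.
Proof. by apply/forallP => x; rewrite eqxx implybT. Qed.

Lemma agree_out_sym s t : agree_out W s t = agree_out W t s.
Proof.
by apply/forallP/forallP => st x; move: (st x); rewrite eq_sym.
Qed.

Lemma agree_out_trans s t k : agree_out W s t -> agree_out W t k -> agree_out W s k.
Proof.
move=> /forallP st /forallP tk; apply/forallP => x; apply/implyP => xW.
by move/implyP: (st x) => /(_ xW) /eqP ->; move/implyP: (tk x) => /(_ xW).
Qed.

Lemma agree_out_join u s : agree_out W s (join u s).
Proof. by apply/forallP => x; apply/implyP => xW; rewrite ffunE (negPf xW). Qed.

Lemma join_restr s k : agree_out W s k -> join (restr W k) s = k.
Proof.
move=> /forallP sk; apply/ffunP => x; rewrite ffunE; case: ifP => xW.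
  by rewrite /glob (insubT (fun y => y \in W) xW) ffunE /= glob_val.
by move/implyP: (sk x); rewrite xW => /(_ isT) /eqP.
Qed.

Hypothesis subWX : (W `<=` X)%fset.

Lemma restr_join u s : restr W (join u s) = u.
Proof.
apply/ffunP => w; rewrite ffunE.
have wX : val w \in X by apply: (fsubsetP subWX); apply: fsvalP.
by rewrite /glob (insubT (fun y => y \in X) wX) ffunE /= (fsvalP w) glob_val.
Qed.

Lemma extop_mulo (A B : opr (basis W)) s t :
  mulo (extop (X := X) A) (extop (X := X) B) s t = extop (X := X) (mulo A B) s t.
Proof.
rewrite /mulo /extop; case: (boolP (agree_out W s t)) => st; last first.
  apply: big1 => k _; case: (boolP (agree_out W s k)) => sk; last by rewrite mul0r.
  case: (boolP (agree_out W k t)) => kt; last by rewrite mulr0.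
  by rewrite (agree_out_trans sk kt) in st.
rewrite (bigID (agree_out W s)) /= [Y in _ + Y]big1 ?addr0 => [|k /negPf ->]; last first.
  by rewrite mul0r.
rewrite (reindex_onto (fun u => join u s) (restr W)) /= => [|k]; last exact: join_restr.
apply: eq_big => [u|u _]; first by rewrite agree_out_join restr_join eqxx.
rewrite agree_out_join restr_join (agree_out_trans _ st) //.
by rewrite agree_out_sym agree_out_join.
Qed.

Lemma projector_extop (A : opr (basis W)) : projector A -> projector (extop (X := X) A).
Proof.
move=> [iA hA]; split=> s t.
  by rewrite extop_mulo /extop; case: ifP => // _; rewrite iA.
by rewrite /adjo /extop agree_out_sym; case: ifP => _; [apply: hA | rewrite conjC0].
Qed.

End Extension.

Lemma extop_self (W : {fset nat}) (M : opr (basis W)) : extop (X := W) M = M.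
Proof.
have restr_self (s : basis W) : restr W s = s by apply/ffunP => w; rewrite ffunE glob_val.
do 2 apply: functional_extensionality => ?.
rewrite /extop !restr_self; case: ifP => // /negP []; apply/forallP => x.
by rewrite (fsvalP x).
Qed.

Lemma tro_mulo_extop_subr (W X : {fset nat}) (M N : opr (basis W)) (rho : opr (basis X)) :
  tro (mulo (extop (X := X) (fun s t => N s t - M s t)) rho) =
  tro (mulo (extop (X := X) N) rho) - tro (mulo (extop (X := X) M) rho).
Proof.
rewrite /tro /mulo -sumrB; apply: eq_bigr => i _; rewrite -sumrB.
apply: eq_bigr => k _; rewrite /extop; case: ifP => _; last by rewrite mul0r subrr.
by rewrite mulrBl.
Qed.

Definition scale_sop (V : {fset nat}) (c : C) : sop (basis V) :=
  fun rho s t => c * rho s t.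
Arguments scale_sop : clear implicits.

Lemma extsop_scale (V X : {fset nat}) c (rho : opr (basis X)) :
  extsop (X := X) (scale_sop V c) rho = fun s t => c * rho s t.
Proof.
do 2 apply: functional_extensionality => ?.
by rewrite /extsop /scale_sop !join_restr ?agree_out_refl.
Qed.

Lemma DProg_scale (V : {fset nat}) c : 0 <= c -> c <= 1 -> DProg (scale_sop V c).
Proof.
move=> c_ge0 c_le1; split; [|split].
- by move=> a A B i j; rewrite /scale_sop; ring.
- move=> k rho rho_ge0 v.
  have -> : \sum_i \sum_j (v i)^* * sop_ext (scale_sop V c) rho i j * v j =
      c * \sum_i \sum_j (v i)^* * rho i j * v j.
    rewrite mulr_sumr; apply: eq_bigr => -[i i'] _; rewrite mulr_sumr.
    by apply: eq_bigr => -[j j'] _; rewrite /sop_ext /scale_sop /=; ring.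
  exact: mulr_ge0.
- by move=> rho rho_ge0; rewrite tro_scale ler_piMl ?tro_ge0.
Qed.

Definition basis_fset0 : basis fset0 := [ffun _ => false].

Lemma basis_fset0E (i : basis fset0) : i = basis_fset0.
Proof. by apply/ffunP => x; have := fsvalP x; rewrite in_fset0. Qed.

Lemma big_basis_fset0 (F : basis fset0 -> C) : \sum_i F i = F basis_fset0.
Proof.
by rewrite (bigD1 basis_fset0) //= big1 ?addr0 // => i; rewrite (basis_fset0E i) eqxx.
Qed.

Lemma agree_out_fset0 (X : {fset nat}) (s t : basis X) : agree_out fset0 s t = (s == t).
Proof.
apply/forallP/eqP => [st|-> x]; last by rewrite eqxx implybT.
by apply/ffunP => x; move/implyP: (st x); rewrite in_fset0 => /(_ isT) /eqP.
Qed.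

Lemma tro_mulo_extop_const (X : {fset nat}) c (rho : opr (basis X)) :
  tro (mulo (extop (X := X) (fun _ _ : basis fset0 => c)) rho) = c * tro rho.
Proof.
rewrite /tro /mulo mulr_sumr; apply: eq_bigr => i _.
rewrite (bigD1 i) //= big1 ?addr0; first by rewrite /extop agree_out_fset0 eqxx.
by move=> k ki; rewrite /extop agree_out_fset0 eq_sym (negPf ki) mul0r.
Qed.

Lemma effect_const c : 0 <= c -> c <= 1 -> effect (fun _ _ : basis fset0 => c).
Proof.
move=> c_ge0 c_le1; split.
  by move=> v; rewrite !big_basis_fset0 mulrC mulrA mulr_ge0 ?mul_conjC_ge0.
move=> l [v [[i vi_neq0] Av]]; rewrite (basis_fset0E i) in vi_neq0.
move: (Av basis_fset0); rewrite /appo big_basis_fset0 => cv.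
have : (c - l) * v basis_fset0 == 0 by rewrite mulrBl cv subrr.
by rewrite mulf_eq0 (negPf vi_neq0) orbF subr_eq0 => /eqP <-; rewrite c_ge0 c_le1.
Qed.

Lemma pdensity_one : pdensity (fun _ _ : basis fset0 => 1).
Proof.
by split; [case: (effect_const ler01 (lexx 1)) | rewrite /tro big_basis_fset0].
Qed.

Lemma fsubset_fset0U (W : {fset nat}) : (fset0 `|` W `<=` W)%fset.
Proof. by rewrite fset0U fsubset_refl. Qed.

Section ProjectorSpecifications.
Variables (W : {fset nat}) (M N : opr (basis W)).
Hypotheses (M_proj : projector M) (N_proj : projector N).
Variable c : C.

Lemma sat_tot_scale_projector_eq0 : 0 <= c -> c < 1 ->
  sat_tot (scale_sop fset0 c) M N -> forall i j, M i j = 0.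
Proof.
move=> c_ge0 c_lt1 tot i j; set w := fun s => M s j.
have := tot W (fsubset_fset0U W) _ (pdensity_outer_projector_column j M_proj).
rewrite extsop_scale !extop_self tro_mulo_scale !tro_mulo_outer.
under [X in X <= _]eq_bigr do rewrite appo_projector_column //.
set x := inner w w; set y := inner w (appo N w) => x_le_cy.
have y_le_x : y <= x by rewrite -subr_ge0 inner_sub_projection ?inner_ge0.
have : x <= c * x by apply: (le_trans x_le_cy); rewrite ler_wpM2l.
rewrite -subr_le0 -{1}(mul1r x) -mulrBl pmulr_rle0 ?subr_gt0 // => x_le0.
have x0 : x = 0 by apply/eqP; rewrite eq_le x_le0 inner_ge0.
exact: inner_eq0 x0 i.
Qed.

Lemma sat_par_scale_projector_mulo : 0 < c ->
  sat_par (scale_sop fset0 c) M N -> forall i j, mulo N M i j = M i j.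
Proof.
move=> c_gt0 par i j; set w := fun s => M s j.
have := par W (fsubset_fset0U W) _ (pdensity_outer_projector_column j M_proj).
rewrite extsop_scale !extop_self tro_mulo_scale tro_scale tro_outer !tro_mulo_outer.
under [X in X <= _]eq_bigr do rewrite appo_projector_column //.
set x := inner w w; set y := inner w (appo N w) => x_le.
have x_le_y : x <= y.
  by rewrite -(ler_pM2l c_gt0) -(lerD2r (x - c * x)) addrCA subrr addr0 addrA.
have /eqP : x - y == 0.
  by rewrite eq_le subr_le0 x_le_y inner_sub_projection ?inner_ge0.
rewrite inner_sub_projection // => /inner_eq0/(_ i)/eqP; rewrite subr_eq0 => /eqP wi.
exact: esym wi.
Qed.

End ProjectorSpecifications.

Lemma le_T_e_le_T_p (V : {fset nat}) (E F : sop (basis V)) : le_T_e E F -> le_T_p E F.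
Proof. by move=> EF W M N /projector_effect M_eff /projector_effect N_eff; apply: EF. Qed.

Lemma le_P_e_le_P_p (V : {fset nat}) (E F : sop (basis V)) : le_P_e E F -> le_P_p E F.
Proof. by move=> EF W M N /projector_effect M_eff /projector_effect N_eff; apply: EF. Qed.

Section ScaleRefinement.
Variable c : C.

Lemma le_T_p_scale_zero : 0 <= c -> c < 1 ->
  le_T_p (scale_sop fset0 c) (scale_sop fset0 0).
Proof.
move=> c_ge0 c_lt1 W M N M_proj N_proj tot X _ rho _.
have M0 := sat_tot_scale_projector_eq0 M_proj N_proj c_ge0 c_lt1 tot.
rewrite extsop_scale tro_mulo_scale mul0r /tro big1 // => i _.
by rewrite /mulo big1 // => k _; rewrite /extop M0 if_same mul0r.
Qed.

Lemma not_le_T_e_scale_zero : 0 < c -> c <= 1 ->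
  ~ le_T_e (scale_sop fset0 c) (scale_sop fset0 0).
Proof.
move=> c_gt0 c_le1 le_e.
have tot : sat_tot (scale_sop fset0 c) (fun _ _ : basis fset0 => c) (fun _ _ => 1).
  by move=> X _ rho _; rewrite extsop_scale tro_mulo_scale !tro_mulo_extop_const mul1r.
have := le_e _ _ _ (effect_const (ltW c_gt0) c_le1) (effect_const ler01 (lexx 1)) tot
  _ (fsubset_fset0U fset0) _ pdensity_one.
rewrite extsop_scale tro_mulo_scale !tro_mulo_extop_const mul0r /tro big_basis_fset0.
by rewrite mulr1 (lt_geF c_gt0).
Qed.

Lemma le_P_p_scale_one : 0 < c -> le_P_p (scale_sop fset0 c) (scale_sop fset0 1).
Proof.
move=> c_gt0 W M N M_proj N_proj par X VWX rho [rho_ge0 _].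
have WX : (W `<=` X)%fset by rewrite fset0U in VWX.
have NM := sat_par_scale_projector_mulo M_proj N_proj c_gt0 par.
rewrite extsop_scale tro_mulo_scale tro_scale !mul1r addrK -subr_ge0 -tro_mulo_extop_subr.
exact: projector_tro_ge0 (projector_extop WX (projector_subr M_proj N_proj NM)) rho_ge0.
Qed.

Lemma not_le_P_e_scale_one : 0 <= c -> c < 1 ->
  ~ le_P_e (scale_sop fset0 c) (scale_sop fset0 1).
Proof.
move=> c_ge0 c_lt1 le_e.
have c'_ge0 : 0 <= 1 - c by rewrite subr_ge0 ltW.
have c'_le1 : 1 - c <= 1 by rewrite gerBl.
have par : sat_par (scale_sop fset0 c) (fun _ _ : basis fset0 => 1 - c) (fun _ _ => 0).
  move=> X _ rho _; rewrite extsop_scale tro_mulo_scale tro_scale !tro_mulo_extop_const.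
  by rewrite mul0r mulr0 add0r mulrBl mul1r.
have := le_e _ _ _ (effect_const c'_ge0 c'_le1) (effect_const (lexx 0) ler01) par
  _ (fsubset_fset0U fset0) _ pdensity_one.
rewrite extsop_scale tro_mulo_scale tro_scale !tro_mulo_extop_const /tro big_basis_fset0.
by rewrite !mul0r !mul1r add0r subrr mulr1 lt_geF // subr_gt0.
Qed.

End ScaleRefinement.

Theorem proposition4p8 :
  ((forall (V : {fset nat}) (E F : sop (basis V)),
      DProg E -> DProg F -> le_T_e E F -> le_T_p E F) /\
   (exists (V : {fset nat}) (E F : sop (basis V)),
      DProg E /\ DProg F /\ le_T_p E F /\ ~ le_T_e E F)) /\
  ((forall (V : {fset nat}) (E F : sop (basis V)),
      DProg E -> DProg F -> le_P_e E F -> le_P_p E F) /\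
   (exists (V : {fset nat}) (E F : sop (basis V)),
      DProg E /\ DProg F /\ le_P_p E F /\ ~ le_P_e E F)).
Proof.
pose c : C := 2^-1.
have c_gt0 : 0 < c by rewrite invr_gt0 ltr0n.
have c_lt1 : c < 1 by rewrite invf_lt1 ?ltr0n ?ltr1n.
have DProg_c := DProg_scale fset0 (ltW c_gt0) (ltW c_lt1).
split; split.
- by move=> V E F _ _; apply: le_T_e_le_T_p.
- exists fset0, (scale_sop fset0 c), (scale_sop fset0 0).
  split; [exact: DProg_c | split; [exact: DProg_scale (lexx 0) ler01 | split]].
  + exact: le_T_p_scale_zero (ltW c_gt0) c_lt1.
  + exact: not_le_T_e_scale_zero c_gt0 (ltW c_lt1).
- by move=> V E F _ _; apply: le_P_e_le_P_p.
- exists fset0, (scale_sop fset0 c), (scale_sop fset0 1).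
  split; [exact: DProg_c | split; [exact: DProg_scale ler01 (lexx 1) | split]].
  + exact: le_P_p_scale_one c_gt0.
  + exact: not_le_P_e_scale_one (ltW c_gt0) c_lt1.
Qed.
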